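(* Let $G$ be a finite nonabelian simple group, $G\le S_n$ a faithful permutation representation of minimum degree, $k\ge1$, and $\Omega=\overline G^k\subseteq\{0,1\}^{kn^2}$. Let $Q=\{(g_1,\dots,g_{2k})\in G^{2k}:g_1=g_{2k}=1\}$, acting on the variables by $M_{i,a,b}\mapsto M_{i,g_{2i-1}(a),g_{2i}(b)}$ (so $M_i\mapsto\overline{g_{2i-1}}M_i\overline{g_{2i}}^{-1}$). Let $H\le K\le Q$, and let $S$ be the edge set of a connected component of the graph $([k],E(H)\cap E(K))$. Let $r\in\mathbb N$, and for each $i\in[r]$ let $H_i\le L_i\le Q$ with $L_i\in\mathcal N_{Q,\Omega}$. Suppose $H_1\cap\dots\cap H_r=H$ and $L_1\cap\dots\cap L_r\le K$. Then there exists $i\in[r]$ with $S\subseteq E(H_i)\cap E(L_i)$.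
   Context: $\overline G$ is the set of permutation matrices of elements of $G$. For $f$ on $\Omega$, $\mathrm{Stab}_Q(f)=\{\pi\in Q:f(\pi x)=f(x)\ \forall x\in\Omega\}$, and $\mathcal N_{Q,\Omega}$ is the set of $\mathrm{Stab}_Q(f)$ for $f:\Omega\to\mathbb N$. For $H\le G^{2k}$ and $S'\subseteq[2k]$, $H{\upharpoonright}_{S'}=\{(h_j)_{j\in S'}: h\in H,\ h_j=1\ \forall j\notin S'\}$. $\mathrm{Diag}(G^{\{2i,2i+1\}})=\{(g,g):g\in G\}$. $E(H)=\{\{i,i+1\}: i\in[k-1],\ H{\upharpoonright}_{\{2i,2i+1\}}=\mathrm{Diag}(G^{\{2i,2i+1\}})\}$ is viewed as an edge set on vertex set $[k]$. *)

From HB Require Import structures.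
From mathcomp Require Import all_boot all_order all_fingroup all_solvable.
Set Implicit Arguments. Unset Strict Implicit. Unset Printing Implicit Defensive.

Local Open Scope group_scope.

(* Coordinates of G^{2k}: indices 0..2k-1 (0-based; paper index j+1). *)
Notation coordT k n := {ffun 'I_(2 * k) -> {perm 'I_n}}.
(* Points of {0,1}^{k n^2}: variable M_{i,a,b} (0-based i,a,b). *)
Notation pointT k n := {ffun 'I_k * 'I_n * 'I_n -> bool}.

(* the m-th coordinate (0-based) of g, or 1 if m is out of range *)
Definition coord k n (g : coordT k n) (m : nat) : {perm 'I_n} :=
  if insub m is Some j then g j else 1.

Definition permb n (g : {perm 'I_n}) (a b : 'I_n) : bool := g a == b.

Definition Omega k n (G : {set {perm 'I_n}}) : {set pointT k n} :=
  [set x : pointT k n | [forall i : 'I_k, [exists g in G,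
     [forall a : 'I_n, forall b : 'I_n, x (i, a, b) == permb g a b]]]].
Arguments Omega : clear implicits.

Definition Qset k n (G : {set {perm 'I_n}}) : {set coordT k n} :=
  [set g : coordT k n | [forall j, g j \in G] && (coord g 0 == 1)
                        && (coord g (2 * k)%N.-1 == 1)].
Arguments Qset : clear implicits.

(* action on points: M_{i,a,b} |-> M_{i, g_{2i-1}(a), g_{2i}(b)} (1-based) *)
Definition qact k n (g : coordT k n) (x : pointT k n) : pointT k n :=
  [ffun t : 'I_k * 'I_n * 'I_n => x (t.1.1, coord g (2 * t.1.1)%N t.1.2, coord g (2 * t.1.1)%N.+1 t.2)].

Definition Stab k n (G : {set {perm 'I_n}}) (f : pointT k n -> nat)
  : {set coordT k n} :=
  [set g in Qset k n G | [forall x in Omega k n G, f (qact g x) == f x]].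
Arguments Stab : clear implicits.

Definition in_NQ k n (G : {set {perm 'I_n}}) (L : {set coordT k n}) : Prop :=
  exists f : pointT k n -> nat, L = Stab k n G f.

Definition cmul k n (g h : coordT k n) : coordT k n := [ffun j => g j * h j].
Definition cone k n : coordT k n := [ffun _ => 1].
Arguments cone : clear implicits.
Definition is_subgroup k n (A : {set coordT k n}) : bool :=
  (cone k n \in A) && [forall g in A, forall h in A, cmul g h \in A].

Definition restr2 k n (H : {set coordT k n}) (a b : nat)
  : {set {perm 'I_n} * {perm 'I_n}} :=
  [set (coord h a, coord h b) | h in H &
     [forall j : 'I_(2 * k), ((val j != a) && (val j != b)) ==> (h j == 1)]].

Definition diag2 n (G : {set {perm 'I_n}}) : {set {perm 'I_n} * {perm 'I_n}} :=
  [set (g, g) | g in G].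

(* E(H): edges {i, i+1} (vertices 0-based in 'I_k); the paper's (1-based)
   coordinates 2i, 2i+1 are 0-based 2i+1, 2i+2 for 0-based vertex i. *)
Definition Eset k n (G : {set {perm 'I_n}}) (H : {set coordT k n})
  : {set {set 'I_k}} :=
  [set e : {set 'I_k} | [exists i : 'I_k, exists j : 'I_k,
     [&& e == [set i; j], val j == (val i).+1 &
         restr2 H (2 * i)%N.+1 (2 * i)%N.+2 == diag2 G]]].

Definition gadj k (E : {set {set 'I_k}}) : rel 'I_k := fun u w => [set u; w] \in E.

Definition component_edges k (E : {set {set 'I_k}}) (v : 'I_k)
  : {set {set 'I_k}} :=
  [set e in E | e \subset [set w | connect (gadj E) v w]].

From Pilot Require Import Defs.
From HB Require Import structures.
From mathcomp Require Import all_boot all_order all_fingroup all_solvable.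
From mathcomp Require Import zify.
Set Implicit Arguments. Unset Strict Implicit. Unset Printing Implicit Defensive.

(* Say that f is block-free at vertex j when f(x) does not depend on the j-th
   matrix of x in Omega.  Since G acts regularly on itself, f is block-free at
   j as soon as Stab_Q(f) contains every element supported on coordinate 2j
   alone (or every one supported on 2j+1 alone), and conversely.  For an edge
   {p, p+1} of E(H) with H <= L = Stab_Q(f), the restriction of L to the two
   coordinates of the edge is a subgroup of G x G containing the diagonal,
   hence, G being simple, either the diagonal or all of G x G.  So {p, p+1} is
   not an edge of E(L) exactly when f is block-free at p, and then f is
   block-free at p+1 as well: block-freeness spreads along the component.  If
   the conclusion failed, every f_i with L_i = Stab_Q(f_i) would be block-free
   on the whole component, so for an edge {p, p+1} of it and x <> 1 the
   element with x at coordinate 2p+1 and 1 elsewhere would lie in every L_i,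
   hence in K, and {p, p+1} could not be an edge of E(K). *)

Section DiagonalOvergroup.
Local Open Scope group_scope.
Variables (gT : finGroupType) (G : {group gT}).

Lemma pair_mulg (a b c d : gT) : (a, b) * (c, d) = (a * c, b * d).
Proof. by []. Qed.

Lemma pair_invg (a b : gT) : (a, b)^-1 = (a^-1, b^-1).
Proof. by []. Qed.

Lemma simple_diag_overgroup (R : {group gT * gT}) :
  simple G -> [set (g, g) | g in G] \subset R -> R \subset setX G G ->
  ~~ (R \subset [set (g, g) | g in G]) -> R :=: setX G G.
Proof.
move=> simG /subsetP diagR /subsetP RGG /subsetPn [[x y] xyR xy_ndiag].
have /andP [xG yG] : (x \in G) && (y \in G) by rewrite -in_setX RGG.
have gg_R g : g \in G -> (g, g) \in R by move=> gG; rewrite diagR ?imset_f.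
pose N := G :&: pairg1 gT @*^-1 R.
have mem_N z : (z \in N) = (z \in G) && ((z, 1) \in R) by rewrite !inE.
have N_conj z g : z \in N -> g \in G -> z ^ g \in N.
  rewrite !mem_N => /andP [zG zR] gG; rewrite groupJ //=.
  by have := groupJ zR (gg_R g gG); rewrite /conjg pair_invg !pair_mulg mul1g mulVg.
have N_normal : N <| G.
  rewrite /normal subsetIl; apply/subsetP => g gG; rewrite inE; apply/subsetP => z.
  by rewrite mem_conjg => /N_conj /(_ gG); rewrite conjgKV.
have xy_N : x * y^-1 \in N.
  rewrite mem_N groupM ?groupV //=.
  by have := groupM xyR (groupVr (gg_R y yG)); rewrite pair_invg pair_mulg mulgV.
have N_G : N :=: G.
  case/simpleP: simG => _ /(_ _ N_normal) [] // N1.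
  move: xy_N; rewrite (N1 : N = 1) => /set1gP /eqP; rewrite mulg_eq1 invgK => /eqP xy.
  by case/negP: xy_ndiag; rewrite xy imset_f.
apply/eqP; rewrite eqEsubset; apply/andP; split; first exact/subsetP.
apply/subsetP => -[a b] /[!in_setX] /andP [aG bG].
have : a * b^-1 \in N by rewrite N_G groupM ?groupV.
rewrite mem_N => /andP [_ ab_R].
by have := groupM ab_R (gg_R b bG); rewrite pair_mulg mulgKV mul1g.
Qed.
End DiagonalOvergroup.

Section CoordinateTuples.
Variables (n k : nat).
Local Notation cT := (coordT k n).

Definition pair_at (a b : nat) (x y : {perm 'I_n}) : cT :=
  [ffun j : 'I_(2 * k) => if val j == a then x else if val j == b then y else 1%g].

Definition single_at (c : nat) (x : {perm 'I_n}) : cT :=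
  [ffun j : 'I_(2 * k) => if val j == c then x else 1%g].

Lemma coord_ord (g : cT) (j : 'I_(2 * k)) : coord g j = g j.
Proof. by rewrite /coord valK. Qed.

Lemma coord_pair_at a b x y m : a < 2 * k -> b < 2 * k -> a != b ->
  coord (pair_at a b x y) m = if m == a then x else if m == b then y else 1%g.
Proof.
move=> ak bk ab; rewrite /coord; case: insubP => [j _ <-|]; first by rewrite ffunE.
by rewrite -leqNgt => km; case: eqP => [?|_]; [lia | case: eqP => [?|_] //; lia].
Qed.

Lemma coord_single_at c x m : c < 2 * k ->
  coord (single_at c x) m = if m == c then x else 1%g.
Proof.
move=> ck; rewrite /coord; case: insubP => [j _ <-|]; first by rewrite ffunE.
by rewrite -leqNgt => km; case: eqP => [?|_] //; lia.
Qed.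

Lemma single_at_pairl a b x : a != b -> single_at a x = pair_at a b x 1%g.
Proof. by move=> ab; apply/ffunP => j; rewrite !ffunE; case: ifP => //; case: ifP. Qed.

Lemma single_at_pairr a b y : a != b -> single_at b y = pair_at a b 1%g y.
Proof.
move=> ab; apply/ffunP => j; rewrite !ffunE.
by case: (eqVneq (val j) a) => [->|_]; rewrite ?(negPf ab).
Qed.

Lemma cone_pair_at a b : cone k n = pair_at a b 1%g 1%g.
Proof. by apply/ffunP => j; rewrite !ffunE; case: ifP => //; case: ifP. Qed.

Lemma cmul_pair_at a b x y x' y' :
  cmul (pair_at a b x y) (pair_at a b x' y') = pair_at a b (x * x')%g (y * y')%g.
Proof. by apply/ffunP => j; rewrite !ffunE; case: ifP => _; [|case: ifP => _]; rewrite ?mulg1. Qed.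

Section Restriction.
Variables (a b : nat).
Hypotheses (ak : a < 2 * k) (bk : b < 2 * k) (ab : a != b).

Lemma mem_restr2 (L : {set cT}) x y :
  ((x, y) \in restr2 L a b) = (pair_at a b x y \in L).
Proof.
apply/imsetP/idP => [[h /setIdP [hL /forallP h1] [-> ->]] | xyL].
  congr (_ \in L): hL; apply/ffunP => j; rewrite ffunE.
  case: eqP => [<-|ja]; first by rewrite coord_ord.
  case: eqP => [<-|jb]; first by rewrite coord_ord.
  by move: (h1 j); rewrite (introN eqP ja) (introN eqP jb) => /eqP.
exists (pair_at a b x y); last by rewrite !coord_pair_at // eqxx eq_sym (negPf ab) eqxx.
rewrite inE xyL; apply/forallP => j; apply/implyP => /andP [/negPf ja /negPf jb].
by rewrite ffunE ja jb.
Qed.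

Lemma restr2S (L L' : {set cT}) : L \subset L' -> restr2 L a b \subset restr2 L' a b.
Proof. by move=> /subsetP LL'; apply/subsetP => -[x y]; rewrite !mem_restr2 => /LL'. Qed.

Lemma restr2_group_set (L : {set cT}) : is_subgroup L -> group_set (restr2 L a b).
Proof.
case/andP => L1 /forall_inP LM; apply/group_setP; split; first by rewrite mem_restr2 -cone_pair_at.
move=> [x y] [x' y']; rewrite !mem_restr2 => xyL xyL'.
by have /forall_inP /(_ _ xyL') := LM _ xyL; rewrite cmul_pair_at.
Qed.

End Restriction.
End CoordinateTuples.

Lemma gadj_sym k (E : {set {set 'I_k}}) : symmetric (gadj E).
Proof. by move=> u w; rewrite /gadj setUC. Qed.

Section Stabilisers.
Variables (n k : nat) (G : {group {perm 'I_n}}).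
Local Notation cT := (coordT k n).
Local Notation pT := (pointT k n).
Local Notation Omega := (Omega k n G).
Local Notation Stab := (Stab k n G).
(* [qact] alone would denote the quotient action of fingroup/action.v. *)
Local Notation qact := Defs.qact.

Lemma OmegaP (x : pT) : reflect
  (forall i : 'I_k, exists2 h, h \in G & forall a b, x (i, a, b) = permb h a b)
  (x \in Omega).
Proof.
rewrite inE; apply: (iffP forallP) => [hx i | hx i].
  have /existsP [h /andP [hG /forallP hh]] := hx i.
  by exists h => // a b; apply/eqP; exact: (forallP (hh a) b).
have [h hG hh] := hx i; apply/existsP; exists h; rewrite hG.
by apply/forallP => a; apply/forallP => b; rewrite hh.
Qed.

Lemma coord_mem (g : cT) m : (forall j, g j \in G) -> coord g m \in G.
Proof. by move=> gG; rewrite /coord; case: insub. Qed.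

Lemma qact_Omega (g : cT) x : (forall j, g j \in G) -> x \in Omega -> qact g x \in Omega.
Proof.
move=> gG /OmegaP xO; apply/OmegaP => i; have [h hG hh] := xO i.
exists (coord g (2 * i) * h * (coord g (2 * i).+1)^-1)%g.
  by rewrite !groupM ?groupV ?coord_mem.
move=> a b; rewrite ffunE hh /permb !permM.
by apply/eqP/eqP => [->|<-]; rewrite ?permK ?permKV.
Qed.

Lemma single_at_Qset c x : 0 < c < (2 * k).-1 -> x \in G -> single_at k c x \in Qset k n G.
Proof.
move=> /andP [c0 ck] xG; have c2k : c < 2 * k by lia.
rewrite inE !coord_single_at // !ifN ?eqxx ?andbT; try lia.
by apply/forallP => j; rewrite ffunE; case: ifP.
Qed.

Lemma StabP f (g : cT) : reflect
  (g \in Qset k n G /\ forall x, x \in Omega -> f (qact g x) = f x) (g \in Stab f).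
Proof.
apply: (iffP setIdP) => [[gQ /forall_inP fg]|[gQ fg]]; split => //.
  by move=> x /fg /eqP.
by apply/forall_inP => x /fg ->.
Qed.

Lemma Stab_coord f (g : cT) j : g \in Stab f -> g j \in G.
Proof. by case/StabP; rewrite inE => /andP [/andP [/forallP ->]]. Qed.

Lemma restr2_Stab_subset f a b : restr2 (Stab f) a b \subset setX G G.
Proof.
apply/subsetP => _ /imsetP [h /setIdP [hL _] ->].
by rewrite in_setX !coord_mem // => j; apply: Stab_coord hL.
Qed.

Definition block_free (f : pT -> nat) (j : nat) :=
  forall x y, x \in Omega -> y \in Omega ->
  (forall (i : 'I_k) a b, i != j :> nat -> x (i, a, b) = y (i, a, b)) -> f x = f y.

Lemma single_at_Stab f j c x : block_free f j -> (c == 2 * j) || (c == (2 * j).+1) ->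
  0 < c < (2 * k).-1 -> x \in G -> single_at k c x \in Stab f.
Proof.
move=> fj cj cbd xG; have c2k : c < 2 * k by lia.
apply/StabP; split; first exact: single_at_Qset.
move=> y yO; apply: fj => //.
  by apply: qact_Omega => // j'; rewrite ffunE; case: ifP.
move=> i a b ij; rewrite ffunE /= !coord_single_at // !ifN ?perm1 //;
  by case/orP: cj => /eqP c_j; lia.
Qed.

Lemma block_free_of_col_stab f (j : 'I_k) :
  (forall x, x \in G -> single_at k (2 * j).+1 x \in Stab f) -> block_free f j.
Proof.
move=> colS x y xO yO xy; have jk := ltn_ord j.
have /OmegaP/(_ j) [h hG hh] := xO; have /OmegaP/(_ j) [h' h'G hh'] := yO.
case/StabP: (colS _ (groupM (groupVr h'G) hG)) => _ /(_ x xO) <-; congr f.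
apply/ffunP => -[[i a] b]; rewrite ffunE /= !coord_single_at; try lia.
case: (eqVneq (i : nat) j) => [/val_inj ->|ij]; last by rewrite !ifN ?perm1 ?xy //; lia.
rewrite ifN ?eqxx; last lia.
rewrite perm1 hh hh' /permb permM (inj_eq (@perm_inj _ h)).
by apply/eqP/eqP => [->|<-]; rewrite ?permK ?permKV.
Qed.

Lemma block_free_of_row_stab f (j : 'I_k) :
  (forall x, x \in G -> single_at k (2 * j) x \in Stab f) -> block_free f j.
Proof.
move=> rowS x y xO yO xy; have jk := ltn_ord j.
have /OmegaP/(_ j) [h hG hh] := xO; have /OmegaP/(_ j) [h' h'G hh'] := yO.
case/StabP: (rowS _ (groupM h'G (groupVr hG))) => _ /(_ x xO) <-; congr f.
apply/ffunP => -[[i a] b]; rewrite ffunE /= !coord_single_at; try lia.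
case: (eqVneq (i : nat) j) => [/val_inj ->|ij]; last by rewrite !ifN ?perm1 ?xy //; lia.
rewrite eqxx ifN; last lia.
by rewrite perm1 hh hh' /permb permM permKV.
Qed.

Section Edge.
Variables (p q : 'I_k).
Hypothesis pq : q = p.+1 :> nat.
Local Notation a := (2 * p).+1.
Local Notation b := (2 * p).+2.

Let ak : a < 2 * k. Proof. have := ltn_ord q; lia. Qed.
Let bk : b < 2 * k. Proof. have := ltn_ord q; lia. Qed.
Let ab : a != b. Proof. lia. Qed.

Lemma mem_Eset_edge (L : {set cT}) :
  ([set p; q] \in Eset G L) = (restr2 L a b == diag2 G).
Proof.
apply/idP/idP => [|Ldiag]; last first.
  rewrite inE; apply/existsP; exists p; apply/existsP; exists q.
  by rewrite eqxx Ldiag andbT; apply/eqP.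
rewrite inE => /existsP [i /existsP [j /and3P [/eqP e /eqP ji Ldiag]]].
rewrite /= in ji.
have : i \in [set p; q] by rewrite e set21.
have : j \in [set p; q] by rewrite e set22.
rewrite !inE => /orP [] /eqP j_pq /orP [] /eqP i_pq.
- by move: ji; rewrite j_pq i_pq; lia.
- by move: ji pq; rewrite j_pq i_pq; lia.
- by rewrite -i_pq.
- by move: ji; rewrite j_pq i_pq; lia.
Qed.

Lemma pair_at_not_edge (L : {set cT}) x y :
  pair_at k a b x y \in L -> x != y -> [set p; q] \notin Eset G L.
Proof.
rewrite mem_Eset_edge -mem_restr2 // => xyL; apply: contra => /eqP Ldiag.
by move: xyL; rewrite Ldiag => /imsetP [z _ [-> ->]].
Qed.

Lemma Eset_between (H M L : {set cT}) : H \subset M -> M \subset L ->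
  [set p; q] \in Eset G H -> [set p; q] \in Eset G L -> [set p; q] \in Eset G M.
Proof.
rewrite !mem_Eset_edge => HM ML /eqP Hdiag /eqP Ldiag.
by rewrite eqEsubset -{1}Ldiag -Hdiag !restr2S.
Qed.

Lemma pair_at_Stab_l f x : block_free f p -> x \in G -> pair_at k a b x 1%g \in Stab f.
Proof.
move=> fp xG; rewrite -single_at_pairl // (single_at_Stab fp) ?eqxx ?orbT //.
by have := ltn_ord q; lia.
Qed.

Lemma pair_at_Stab_r f x : block_free f q -> x \in G -> pair_at k a b 1%g x \in Stab f.
Proof.
move=> fq xG; rewrite -single_at_pairr // (single_at_Stab fq) //.
  by apply/orP; left; apply/eqP; lia.
by have := ltn_ord q; lia.
Qed.

Lemma block_free_not_edge f (j : 'I_k) x : j \in [set p; q] -> block_free f j ->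
  x \in G -> x != 1%g -> [set p; q] \notin Eset G (Stab f).
Proof.
case/set2P => -> fj xG x1.
  exact: pair_at_not_edge (pair_at_Stab_l fj xG) x1.
by apply: pair_at_not_edge (pair_at_Stab_r fj xG) _; rewrite eq_sym.
Qed.

Lemma not_edge_block_free (H : {set cT}) f : simple G ->
  [set p; q] \in Eset G H -> H \subset Stab f -> is_subgroup (Stab f) ->
  [set p; q] \notin Eset G (Stab f) -> block_free f p /\ block_free f q.
Proof.
move=> simG; rewrite !mem_Eset_edge => /eqP Hdiag HL /(restr2_group_set ak bk ab) Rgrp Rndiag.
have RGG : restr2 (Stab f) a b = setX G G.
  apply: (simple_diag_overgroup (R := Group Rgrp)) => //=.
  - by rewrite -[[set _ | _ in _]]/(diag2 G) -Hdiag restr2S.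
  - exact: (restr2_Stab_subset f a b).
  - by apply: contra Rndiag => Rdiag; rewrite eqEsubset Rdiag -Hdiag restr2S.
have pairS x y : x \in G -> y \in G -> pair_at k a b x y \in Stab f.
  by move=> xG yG; rewrite -mem_restr2 // RGG in_setX xG yG.
split.
  by apply: block_free_of_col_stab => x xG; rewrite (single_at_pairl k x ab) pairS.
apply: block_free_of_row_stab => x xG.
have -> : 2 * q = b by lia.
by rewrite (single_at_pairr k x ab) pairS.
Qed.

End Edge.

Lemma Eset_edgeP (L : {set cT}) e :
  e \in Eset G L -> exists p q : 'I_k, q = p.+1 :> nat /\ e = [set p; q].
Proof. by rewrite inE => /existsP [p /existsP [q /and3P [/eqP -> /eqP pq _]]]; exists p, q. Qed.

Lemma block_free_connect (H : {set cT}) (E : {set {set 'I_k}}) f (u w : 'I_k) : simple G ->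
  E \subset Eset G H -> H \subset Stab f -> is_subgroup (Stab f) ->
  block_free f u -> connect (gadj E) u w -> block_free f w.
Proof.
move=> simG /subsetP EH HL Lgrp fu /connectP [s path_s ->] {w}.
have [x xG x1] : exists2 x, x \in G & x != 1%g by apply/trivgPn; case/simpleP: simG.
elim: s u fu path_s => [|z s IH] u fu //= /andP [/EH uz] /IH; apply.
have [p [q [pq e]]] := Eset_edgeP uz; rewrite e in uz.
have u_pq : u \in [set p; q] by rewrite -e set21.
have z_pq : z \in [set p; q] by rewrite -e set22.
have [fp fq] := not_edge_block_free pq simG uz HL Lgrp (block_free_not_edge pq u_pq fu xG x1).
by case/set2P: z_pq => ->.
Qed.

Lemma component_block_free (H M : {set cT}) (E : {set {set 'I_k}}) f v e :
  simple G -> E \subset Eset G H -> H \subset M -> M \subset Stab f ->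
  is_subgroup (Stab f) -> e \in component_edges E v ->
  e \notin Eset G M :&: Eset G (Stab f) ->
  forall w, connect (gadj E) v w -> block_free f w.
Proof.
move=> simG EH HM ML Lgrp /setIdP [eE /subsetP e_v] e_bad w vw.
have eH := subsetP EH _ eE; have HL := subset_trans HM ML.
have [p [q [pq e_pq]]] := Eset_edgeP eH; subst e.
have eL : [set p; q] \notin Eset G (Stab f).
  by apply: contra e_bad => eL; rewrite inE eL (Eset_between pq HM ML).
have [fp _] := not_edge_block_free pq simG eH HL Lgrp eL.
apply: (block_free_connect simG EH HL Lgrp fp); apply: connect_trans vw.
by rewrite (sym_connect_sym (@gadj_sym k E)); have := e_v p (set21 p q); rewrite inE.
Qed.

End Stabilisers.

Theorem lemma6p10 (n k : nat) (G : {group {perm 'I_n}})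
  (Gsimple : simple G) (Gnonab : ~~ abelian G)
  (Gmindeg : forall (m : nat) (P : {group {perm 'I_m}}), G \isog P -> n <= m)
  (hk : 0 < k)
  (H K : {set coordT k n})
  (subH : is_subgroup H) (subK : is_subgroup K)
  (HK : H \subset K) (KQ : K \subset Qset k n G)
  (S : {set {set 'I_k}})
  (hS : exists v : 'I_k, S = component_edges (Eset G H :&: Eset G K) v)
  (r : nat) (hr : 0 < r) (Hs Ls : 'I_r -> {set coordT k n})
  (subHs : forall i, is_subgroup (Hs i)) (subLs : forall i, is_subgroup (Ls i))
  (HLs : forall i, Hs i \subset Ls i) (LQ : forall i, Ls i \subset Qset k n G)
  (LN : forall i, in_NQ G (Ls i))
  (capH : \bigcap_(i < r) Hs i = H)
  (capL : \bigcap_(i < r) Ls i \subset K) :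
  exists i : 'I_r, S \subset Eset G (Hs i) :&: Eset G (Ls i).
Proof.
case: hS => v ->{S}; set E := Eset G H :&: Eset G K.
apply/existsP/contraT; rewrite negb_exists => /forallP bad.
have [x xG x1] : exists2 x, x \in G & x != 1%g by apply/trivgPn; case/simpleP: Gsimple.
have Ls_free i : exists2 f, Ls i = Stab k n G f &
    forall w, connect (gadj E) v w -> block_free G f w.
  have [f Lf] := LN i; exists f => //; case/subsetPn: (bad i) => e eS e_bad.
  have HHs : H \subset Hs i by rewrite -capH; apply: bigcap_inf.
  have HsL : Hs i \subset Stab k n G f by rewrite -Lf.
  have Lgrp : is_subgroup (Stab k n G f) by rewrite -Lf.
  rewrite Lf in e_bad.
  exact: (component_block_free Gsimple (subsetIl (Eset G H) (Eset G K)) HHs HsL Lgrp eS e_bad).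
case/subsetPn: (bad (Ordinal hr)) => e /setIdP [/setIP [eH eK] /subsetP e_v] _.
have [p [q [pq e_pq]]] := Eset_edgeP eH; subst e.
have vp : connect (gadj E) v p by have := e_v p (set21 p q); rewrite inE.
suff : pair_at k (2 * p).+1 (2 * p).+2 x 1%g \in K.
  by move/(pair_at_not_edge G pq)/(_ x1); rewrite eK.
apply: (subsetP capL); apply/bigcapP => i _; have [f -> f_free] := Ls_free i.
exact: (pair_at_Stab_l pq (f_free p vp) xG).
Qed.
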